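(* Let $\mathcal{X}$ and $\mathcal{Y}$ be mm-spaces. If $L^{\mathcal{U}}_h(\mathcal{X},\mathcal{Y})=0$, then $(h^r_{\mathcal{X}})_\#\mu_X=(h^r_{\mathcal{Y}})_\#\mu_Y$ (as Borel probability measures on $\mathbb{R}$) for Lebesgue-almost every $r>0$.
   Context: A metric measure space (mm-space) is a triple $(X,d_X,\mu_X)$ with $(X,d_X)$ compact metric and $\mu_X$ a Borel probability measure of full support. $h_{\mathcal{X}}(x,r)=\mu_X(\{x'\in X: d_X(x,x')\le r\})$ and, for fixed $r>0$, $h^r_{\mathcal{X}}:X\to\mathbb{R}$ is $h^r_{\mathcal{X}}(x)=h_{\mathcal{X}}(x,r)$. With $c_{\mathcal{X},\mathcal{Y}}(x,y)=\int_0^\infty|h_{\mathcal{X}}(x,t)-h_{\mathcal{Y}}(y,t)|\,dt$ and $\mathcal{U}(\mu_X,\mu_Y)$ the set of probability measures on $X\times Y$ with marginals $\mu_X,\mu_Y$, $L^{\mathcal{U}}_h(\mathcal{X},\mathcal{Y})=\inf_{\mu\in\mathcal{U}(\mu_X,\mu_Y)}\int_{X\times Y}c_{\mathcal{X},\mathcal{Y}}\,d\mu$. *)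

From HB Require Import structures.
From mathcomp Require Import all_boot all_order all_algebra.
From mathcomp Require Import all_classical all_reals all_analysis.
Set Implicit Arguments. Unset Strict Implicit. Unset Printing Implicit Defensive.
Import Order.TTheory GRing.Theory Num.Theory.
Local Open Scope classical_set_scope.
Local Open Scope ring_scope.

Section mm.
Context {R : realType} {T : Type}.

Definition is_metric (dX : T -> T -> R) : Prop :=
  (forall x y, dX x y = 0 <-> x = y) /\
  (forall x y, dX x y = dX y x) /\
  (forall x y z, dX x z <= dX x y + dX y z).

Definition dopen (dX : T -> T -> R) (A : set T) : Prop :=
  forall x, A x -> exists2 e : R, 0 < e & forall y, dX x y < e -> A y.

Definition dcompact (dX : T -> T -> R) : Prop :=
  forall (I : Type) (U : I -> set T), (forall i, dopen dX (U i)) ->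
    [set: T] `<=` \bigcup_(i in [set: I]) U i ->
    exists2 F : set I, finite_set F & [set: T] `<=` \bigcup_(i in F) U i.
End mm.

(* (T, dX, mu) is an mm-space: compact metric, measurable sets = Borel sets
   of the metric topology, mu a probability measure with full support
   (every nonempty open set has positive measure). *)
Definition mm_space {R : realType} {d : measure_display} {T : measurableType d}
  (dX : T -> T -> R) (mu : probability T R) : Prop :=
  [/\ is_metric dX, dcompact dX,
      (@measurable d T) = <<s dopen dX >> &
      forall A : set T, dopen dX A -> A !=set0 -> (0 < mu A)%E].

Definition hfun {R : realType} {d : measure_display} {T : measurableType d}
  (dX : T -> T -> R) (mu : probability T R) (x : T) (r : R) : R :=
  fine (mu [set x' | dX x x' <= r]).

Definition hcost {R : realType} {d1 d2 : measure_display}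
  {T1 : measurableType d1} {T2 : measurableType d2}
  (dX : T1 -> T1 -> R) (muX : probability T1 R)
  (dY : T2 -> T2 -> R) (muY : probability T2 R) (x : T1) (y : T2) : \bar R :=
  (\int[lebesgue_measure]_(t in `[0%R, +oo[%classic)
     (`| hfun dX muX x t - hfun dY muY y t |)%:E)%E.

Definition coupling {R : realType} {d1 d2 : measure_display}
  {T1 : measurableType d1} {T2 : measurableType d2}
  (muX : probability T1 R) (muY : probability T2 R)
  (pi : probability (T1 * T2)%type R) : Prop :=
  (forall A : set T1, measurable A -> pi (A `*` [set: T2]) = muX A) /\
  (forall B : set T2, measurable B -> pi ([set: T1] `*` B) = muY B).

Definition LUh {R : realType} {d1 d2 : measure_display}
  {T1 : measurableType d1} {T2 : measurableType d2}
  (dX : T1 -> T1 -> R) (muX : probability T1 R)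
  (dY : T2 -> T2 -> R) (muY : probability T2 R) : \bar R :=
  ereal_inf [set (\int[pi]_z hcost dX muX dY muY z.1 z.2)%E
            | pi in [set pi | coupling muX muY pi]].

From HB Require Import structures.
From mathcomp Require Import all_boot all_order all_algebra.
From mathcomp Require Import all_classical all_reals all_analysis.
From mathcomp Require Import ring lra measurable_realfun.
Import Order.TTheory GRing.Theory Num.Theory.
Local Open Scope classical_set_scope.
Local Open Scope ring_scope.

(* Since [hfun] is nondecreasing in the radius, the cost [hcost x y] is at least
   [e] times the discrepancy [|h_X(x,r) - h_Y(y,r)|] minus the increments of
   [h_X(x,.)] and [h_Y(y,.)] on [[r, r + e]].  By right continuity of the radius
   functions these increments are small off sets of small measure once [e] is
   small, so couplings of almost zero cost make [h_X(x,r)] and [h_Y(y,r)] close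
   in probability.  Such couplings force the laws of [h_X(.,r)] and [h_Y(.,r)]
   to agree on every ray [[q, +oo[], hence on all Borel sets; the conclusion in
   fact holds for every [r > 0]. *)

Section nonnegative_integral.
Context d (T : measurableType d) (R : realType) (mu : {measure set T -> \bar R}).
Local Open Scope ereal_scope.

(* [hcost] is not known to be measurable, hence this variant of [ge0_le_integral];
   it holds because the integral of a nonnegative function is a supremum over
   the simple functions below it. *)
Lemma ge0_le_integral_nonmeasurable (D : set T) (f g : T -> \bar R) :
  (forall x, D x -> 0 <= f x) -> (forall x, D x -> f x <= g x) ->
  \int[mu]_(x in D) f x <= \int[mu]_(x in D) g x.
Proof.
move=> f0 fg.
have g0 x : D x -> 0 <= g x by move=> Dx; exact: le_trans (f0 x Dx) (fg x Dx).
rewrite !ge0_integralE//; apply: le_ereal_sup => _ [h hf <-]; exists h => // x.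
apply: le_trans (hf x) _; rewrite /patch; case: ifP => // /set_mem; exact: fg.
Qed.

Lemma measure_mul_le_integral (D S : set T) (f : T -> \bar R) (k : R) :
  measurable D -> measurable S -> (0 <= k)%R ->
  (forall x, D x -> 0 <= f x) -> (forall x, D x -> S x -> k%:E <= f x) ->
  k%:E * mu (S `&` D) <= \int[mu]_(x in D) f x.
Proof.
move=> mD mS k0 f0 kf.
have mS1 : measurable_fun D (fun x => (\1_S x)%:E : \bar R).
  by apply/measurable_EFinP; exact: measurable_indic.
rewrite -integral_indic// -ge0_integralZl_EFin//.
apply: ge0_le_integral_nonmeasurable => x Dx; first by rewrite -EFinM lee_fin mulr_ge0.
rewrite indicE; case: (boolP (x \in S)) => [/set_mem Sx|_]; first by rewrite mule1 kf.
by rewrite mule0 f0.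
Qed.

End nonnegative_integral.

Lemma measurableT_preimage {d} {T : measurableType d} {R : realType} {f : T -> R} (Y : set R) :
  measurable_fun setT f -> measurable Y -> measurable (f @^-1` Y).
Proof. by move=> mf mY; rewrite -[_ @^-1` _]setTI; exact: mf. Qed.

Section real_laws.
Context (R : realType).

Lemma le_measure_ge_dist {d} {T : measurableType d} (mu : {measure set T -> \bar R})
    {F G : T -> R} (q eta : R) :
  measurable_fun setT F -> measurable_fun setT G ->
  (mu (F @^-1` `[q, +oo[) <=
   mu (G @^-1` `](q - eta)%R, +oo[) + mu ((fun z => `|F z - G z|%R) @^-1` `[eta, +oo[))%E.
Proof.
move=> mF mG.
have mdist : measurable_fun setT (fun z => `|F z - G z|).
  by apply: measurableT_comp => //; exact: measurable_funB.
apply: le_trans (measureU2 _ _ _); try exact: measurableT_preimage.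
apply: le_measure; rewrite ?inE; try apply: measurableU;
  try exact: measurableT_preimage.
move=> z /=; rewrite !in_itv /= !andbT => Fq.
have [Gq|Gq] := ltP (q - eta)%R (G z); [by left | right].
by apply: le_trans (ler_norm _); lra.
Qed.

Lemma le_measure_ge_of_close d (T : measurableType d) d' (T' : measurableType d')
    (mu : probability T R) (nu : probability T' R) (f : T -> R) (g : T' -> R) :
  measurable_fun setT g ->
  (forall q eta eps : R, 0 < eta -> 0 < eps ->
    (mu (f @^-1` `[q, +oo[) <= nu (g @^-1` `](q - eta)%R, +oo[) + eps%:E)%E) ->
  forall q, (mu (f @^-1` `[q, +oo[) <= nu (g @^-1` `[q, +oo[))%E.
Proof.
move=> mg close q.
have mgq (k : nat) : measurable (g @^-1` `]q - k.+1%:R^-1, +oo[).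
  exact: measurableT_preimage.
have gqE : g @^-1` `[q, +oo[ = \bigcap_k g @^-1` `]q - k.+1%:R^-1, +oo[.
  by rewrite -preimage_bigcap -itvcyEbigcap.
have : nu (g @^-1` `]q - k.+1%:R^-1, +oo[) @[k --> \oo] --> nu (g @^-1` `[q, +oo[).
  rewrite gqE; apply: nonincreasing_cvg_mu => //.
  - by rewrite (le_lt_trans (probability_le1 _ _))// ltry.
  - by rewrite -gqE; exact: measurableT_preimage.
  move=> n m nm; apply/subsetPset => x /=; rewrite !in_itv /= !andbT.
  apply: le_lt_trans; rewrite lerB// lef_pV2 ?posrE// ler_nat.
  by rewrite ltnS.
move/cvge_to_ge; apply; apply: nearW => k.
apply/lee_addgt0Pr => eps eps0; exact: close.
Qed.

Lemma pushforward_eq_of_ge d (T : measurableType d) d' (T' : measurableType d')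
    (mu : probability T R) (nu : probability T' R) (f : T -> R) (g : T' -> R)
    (mf : measurable_fun setT f) (mg : measurable_fun setT g) :
  (forall q, mu (f @^-1` `[q, +oo[) = nu (g @^-1` `[q, +oo[)) ->
  forall A, measurable A -> pushforward mu f A = pushforward nu g A.
Proof.
move=> fg A mA.
pose mu_f : measure R R := ltac:(refine (pushforward mu f : measure _ _); exact: mf).
pose nu_g : measure R R := ltac:(refine (pushforward nu g : measure _ _); exact: mg).
apply: (measure_unique (@RGenCInfty.G R) (fun k : nat => `[- k%:R, +oo[%classic)
  _ _ _ _ mu_f nu_g) => //.
- exact: RGenCInfty.measurableE.
- move=> _ _ [x ->] [y ->]; exists (Order.max x y).
  by apply/seteqP; split => z /=; rewrite !in_itv /= !andbT ge_max => /andP.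
- by move=> k; exists (- k%:R).
- apply/seteqP; split => // z _; exists (Num.trunc `|z|).+1 => //=.
  rewrite in_itv /= andbT lerNl -normrN (le_trans (ler_norm _))//.
  by rewrite normrN ltW// truncnS_gt.
- by move=> _ [x ->]; exact: fg.
- move=> k; rewrite (le_lt_trans (probability_le1 _ _)) ?ltry//.
  exact: measurableT_preimage.
Qed.

Lemma pushforward_eq_of_coupled_close d1 d2 (T1 : measurableType d1)
    (T2 : measurableType d2) (muX : probability T1 R) (muY : probability T2 R)
    (f : T1 -> R) (g : T2 -> R) :
  measurable_fun setT f -> measurable_fun setT g ->
  (forall eta eps : R, 0 < eta -> 0 < eps -> exists2 pi, coupling muX muY pi &
     (pi ((fun z => `|f z.1 - g z.2|%R) @^-1` `[eta, +oo[) <= eps%:E)%E) ->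
  forall A, measurable A -> pushforward muX f A = pushforward muY g A.
Proof.
move=> mf mg close; apply: pushforward_eq_of_ge => // q.
have mf1 : measurable_fun setT (fun z : T1 * T2 => f z.1).
  exact: measurableT_comp mf measurable_fst.
have mg2 : measurable_fun setT (fun z : T1 * T2 => g z.2).
  exact: measurableT_comp mg measurable_snd.
apply/eqP; rewrite eq_le; apply/andP; split;
  apply: le_measure_ge_of_close => // {}q eta eps eta0 eps0;
  have [pi [cX cY] small] := close eta eps eta0 eps0.
- rewrite -cX ?setXT; last exact: measurableT_preimage.
  rewrite -cY ?setTX; last exact: measurableT_preimage.
  by apply: le_trans (le_measure_ge_dist pi q eta mf1 mg2) _; rewrite leeD2l.
- rewrite -cY ?setTX; last exact: measurableT_preimage.
  rewrite -cX ?setXT; last exact: measurableT_preimage.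
  apply: le_trans (le_measure_ge_dist pi q eta mg2 mf1) _; rewrite leeD2l//.
  suff -> : (fun z : T1 * T2 => `|g z.2 - f z.1|%R) = (fun z => `|f z.1 - g z.2|%R) by [].
  by apply/funext => z; rewrite distrC.
Qed.

End real_laws.

Section mm_space.
Context {R : realType} {d} {T : measurableType d} {dX : T -> T -> R} {mu : probability T R}.
Hypothesis mmX : mm_space dX mu.

Lemma dopen_measurable A : dopen dX A -> measurable A.
Proof. by case: mmX => _ _ -> _ oA; exact: sub_sigma_algebra. Qed.

Lemma measurable_ball x t : measurable [set y | dX x y <= t].
Proof.
case: mmX => [[_ [dXC dX_tri]]] _ _ _.
rewrite -[X in measurable X]setCK; apply: measurableC; apply: dopen_measurable.
move=> y /= /negP; rewrite -ltNge => ty; exists (dX x y - t); first by rewrite subr_gt0.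
move=> z yz /=; apply/negP; rewrite -ltNge.
by have := dX_tri x z y; rewrite (dXC z y); lra.
Qed.

Lemma hfunE x t : (hfun dX mu x t)%:E = mu [set y | dX x y <= t].
Proof. by rewrite /hfun fineK// fin_num_measure//; exact: measurable_ball. Qed.

Lemma le_hfun x s t : s <= t -> hfun dX mu x s <= hfun dX mu x t.
Proof.
move=> st; rewrite -lee_fin !hfunE; apply: le_measure; rewrite ?inE;
  try exact: measurable_ball.
by move=> y /= /le_trans; apply.
Qed.

Lemma hfun_right_cont x t a : hfun dX mu x t < a ->
  \forall n \near \oo, hfun dX mu x (t + n.+1%:R^-1) < a.
Proof.
move=> ha; pose B n := [set y | dX x y <= t + n.+1%:R^-1].
have B_ball : \bigcap_n B n = [set y | dX x y <= t].
  apply/seteqP; split => y /=; last first.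
    by move=> yt n _; apply: (le_trans yt); rewrite lerDl.
  move=> yB; apply/ler_addgt0Pr => e e0.
  near \oo => n; apply: le_trans (yB n I) _; rewrite lerD2l ltW//.
  by near: n; exact: (near_infty_natSinv_lt (PosNum e0)).
have : mu (B n) @[n --> \oo] --> (hfun dX mu x t)%:E.
  rewrite hfunE -B_ball; apply: nonincreasing_cvg_mu.
  - by rewrite (le_lt_trans (probability_le1 _ _)) ?ltry//; exact: measurable_ball.
  - by move=> n; exact: measurable_ball.
  - by rewrite B_ball; exact: measurable_ball.
  move=> n m nm; apply/subsetPset => y /= /le_trans; apply.
  by rewrite lerD2l lef_pV2 ?posrE// ler_nat.
move/(_ _ (@nbhs_open_ereal_lt _ _ (fun=> a) ha)).
by case=> N _ aB; exists N => // n /aB /=; rewrite -hfunE lte_fin.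
Unshelve. all: by end_near. Qed.

(* Right continuity in the radius makes [hfun dX mu ^~ t] upper semicontinuous:
   its strict sublevel sets are open. *)
Lemma measurable_hfun t : measurable_fun setT (fun x => hfun dX mu x t).
Proof.
case: mmX => [[_ [_ dX_tri]]] _ _ _.
apply: (@measurability _ _ _ _ setT _ (@RGenInftyO.G R)).
  exact: RGenInftyO.measurableE.
move=> _ [_ [a ->] <-]; rewrite setTI; apply: dopen_measurable => x /=.
rewrite in_itv /= => /hfun_right_cont[N _ xN].
exists N.+1%:R^-1 => // y xy; rewrite in_itv /=.
apply: le_lt_trans (xN N (leqnn N)).
rewrite -lee_fin !hfunE; apply: le_measure; rewrite ?inE; try exact: measurable_ball.
move=> z /= yz; apply: le_trans (dX_tri x y z) _.
by rewrite addrC lerD// ltW.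
Qed.

Lemma cvg_hfun_increment r a : 0 < a ->
  mu ((fun x => hfun dX mu x (r + n.+1%:R^-1) - hfun dX mu x r) @^-1` `]a, +oo[)
    @[n --> \oo] --> 0%E.
Proof.
move=> a0; pose E n := (fun x => hfun dX mu x (r + n.+1%:R^-1) - hfun dX mu x r)
  @^-1` `]a, +oo[.
have mE n : measurable (E n).
  apply: measurableT_preimage => //.
  by apply: measurable_funB; exact: measurable_hfun.
have E0 : \bigcap_n E n = set0.
  apply/seteqP; split => // x Ex.
  have [N _ xN] : \forall n \near \oo, hfun dX mu x (r + n.+1%:R^-1) < hfun dX mu x r + a.
    by apply: hfun_right_cont; rewrite ltrDl.
  by move: (Ex N I) (xN N (leqnn N)); rewrite /E /= in_itv /= andbT; lra.
rewrite -(measure0 mu) -E0; apply: (nonincreasing_cvg_mu (F := E)) => //.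
- by rewrite (le_lt_trans (probability_le1 _ (mE 0))) ?ltry.
- by rewrite E0.
move=> n m nm; apply/subsetPset => x; rewrite /E /= !in_itv /= !andbT.
move=> /lt_le_trans; apply; rewrite lerD2r le_hfun// lerD2l lef_pV2 ?posrE// ler_nat.
by rewrite ltnS.
Qed.

End mm_space.

Lemma ler_distB_bracket (R : realDomainType) (a0 a a1 b0 b b1 : R) :
  a0 <= a <= a1 -> b0 <= b <= b1 ->
  `|a0 - b0| - (a1 - a0) - (b1 - b0) <= `|a - b|.
Proof.
move=> /andP[a0a aa1] /andP[b0b bb1].
suff : `|a0 - b0| <= `|a - b| + (a1 - a0) + (b1 - b0) by lra.
rewrite ler_norml; apply/andP; split.
- by have := ler_norm (b - a); rewrite distrC; lra.
- by have := ler_norm (a - b); lra.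
Qed.

Section hcost_bounds.
Context (R : realType) d1 d2 (T1 : measurableType d1) (T2 : measurableType d2)
  (dX : T1 -> T1 -> R) (muX : probability T1 R)
  (dY : T2 -> T2 -> R) (muY : probability T2 R).
Hypotheses (mmX : mm_space dX muX) (mmY : mm_space dY muY).
Local Notation hX := (hfun dX muX).
Local Notation hY := (hfun dY muY).

(* By monotonicity of the radius functions, [gap r e (x, y)] bounds
   [|hX x t - hY y t|] from below for [t] in [[r, r + e]]. *)
Let gap r e (z : T1 * T2) :=
  `|hX z.1 r - hY z.2 r| - (hX z.1 (r + e) - hX z.1 r) - (hY z.2 (r + e) - hY z.2 r).

Lemma measurable_gap r e : measurable_fun setT (gap r e).
Proof.
have mX t : measurable_fun setT (fun z : T1 * T2 => hX z.1 t).
  exact: measurableT_comp (measurable_hfun mmX t) measurable_fst.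
have mY t : measurable_fun setT (fun z : T1 * T2 => hY z.2 t).
  exact: measurableT_comp (measurable_hfun mmY t) measurable_snd.
by do !apply: measurable_funB => //; apply: measurableT_comp => //; exact: measurable_funB.
Qed.

Lemma hcost_ge_gap r e k x y : 0 <= r -> 0 < e -> 0 <= k -> k <= gap r e (x, y) ->
  ((e * k)%:E <= hcost dX muX dY muY x y)%E.
Proof.
move=> r0 e0 k0 kgap.
have rI : `[r, r + e]%classic `&` `[0, +oo[%classic = `[r, r + e]%classic.
  by apply/setIidl => t /=; rewrite !in_itv /= andbT => /andP[/(le_trans r0)].
have : (k%:E * lebesgue_measure (`[r, (r + e)%R]%classic `&` `[0%R, +oo[%classic) <=
        hcost dX muX dY muY x y)%E.
  apply: measure_mul_le_integral => // t _.
  rewrite /= in_itv /= => /andP[rt te]; rewrite lee_fin (le_trans kgap)//.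
  by apply: ler_distB_bracket; rewrite !le_hfun.
rewrite rI lebesgue_measure_itv /= lte_fin ltrDl e0 -EFinB addrAC subrr add0r.
by rewrite -EFinM mulrC.
Qed.

Lemma integral_hcost_ge_gap (pi : probability (T1 * T2)%type R) r e k :
  0 <= r -> 0 < e -> 0 <= k ->
  ((e * k)%:E * pi (gap r e @^-1` `[k, +oo[) <=
   \int[pi]_z hcost dX muX dY muY z.1 z.2)%E.
Proof.
move=> r0 e0 k0; rewrite -[X in pi X]setIT.
apply: measure_mul_le_integral => //.
- exact: measurableT_preimage (measurable_gap r e) _.
- by rewrite mulr_ge0// ltW.
- by move=> z _; apply: integral_ge0 => t _; rewrite lee_fin.
- by move=> [x y] _; rewrite /= in_itv /= andbT; exact: hcost_ge_gap.
Qed.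

Lemma measure_dist_le_increments (pi : probability (T1 * T2)%type R) r e eta :
  coupling muX muY pi ->
  (pi ((fun z => `|hX z.1 r - hY z.2 r|%R) @^-1` `[eta, +oo[) <=
   muX ((fun x => hX x (r + e) - hX x r)%R @^-1` `](eta / 3)%R, +oo[) +
   muY ((fun y => hY y (r + e) - hY y r)%R @^-1` `](eta / 3)%R, +oo[) +
   pi (gap r e @^-1` `[(eta / 3)%R, +oo[))%E.
Proof.
move=> [cX cY].
have mincrX : measurable_fun setT (fun x => hX x (r + e) - hX x r).
  by apply: measurable_funB; exact: measurable_hfun.
have mincrY : measurable_fun setT (fun y => hY y (r + e) - hY y r).
  by apply: measurable_funB; exact: measurable_hfun.
have mdist : measurable_fun setT (fun z : T1 * T2 => `|hX z.1 r - hY z.2 r|).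
  apply: measurableT_comp => //; apply: measurable_funB.
    exact: measurableT_comp (measurable_hfun mmX r) measurable_fst.
  exact: measurableT_comp (measurable_hfun mmY r) measurable_snd.
rewrite -cX ?setXT -?cY ?setTX; try exact: measurableT_preimage.
set A := fst @^-1` _; set B := snd @^-1` _; set G := gap r e @^-1` _.
have mA : measurable A by rewrite /A -setXT; apply: measurableX => //; exact: measurableT_preimage.
have mB : measurable B by rewrite /B -setTX; apply: measurableX => //; exact: measurableT_preimage.
have mG : measurable G by apply: measurableT_preimage => //; exact: measurable_gap.
apply: (@le_trans _ _ (pi (A `|` B `|` G))).
  apply: le_measure; rewrite ?inE; first exact: measurableT_preimage.
    by apply: measurableU => //; exact: measurableU.
  move=> [x y]; rewrite /A /B /G /= !in_itv /= !andbT => dist_ge.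
  have [incrX|] := ltP (eta / 3) (hX x (r + e) - hX x r); first by left; left.
  have [incrY|] := ltP (eta / 3) (hY y (r + e) - hY y r); first by left; right.
  by move=> incrY incrX; right; rewrite /gap /=; lra.
apply: le_trans (measureU2 _ _ _) _ => //; first exact: measurableU.
by rewrite leeD2r// measureU2.
Qed.

Lemma coupling_small_gap r e k eps : LUh dX muX dY muY = 0%E ->
  0 <= r -> 0 < e -> 0 < k -> 0 < eps ->
  exists2 pi, coupling muX muY pi & (pi (gap r e @^-1` `[k, +oo[) <= eps%:E)%E.
Proof.
move=> L0 r0 e0 k0 eps0.
have L0fin : LUh dX muX dY muY \is a fin_num by rewrite L0.
have [_ [pi cpl <-]] := lb_ereal_inf_adherent (mulr_gt0 (mulr_gt0 e0 k0) eps0) L0fin.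
rewrite [ereal_inf _]L0 add0e => cost_small; exists pi => //.
rewrite -(@lee_pmul2l _ (e * k)%:E) ?lte_fin ?mulr_gt0//.
apply: le_trans (@integral_hcost_ge_gap pi r e k r0 e0 (ltW k0)) _.
by rewrite -EFinM ltW.
Qed.

Lemma LUh0_coupled_close r : LUh dX muX dY muY = 0%E -> 0 <= r ->
  forall eta eps, 0 < eta -> 0 < eps -> exists2 pi, coupling muX muY pi &
    (pi ((fun z => `|hX z.1 r - hY z.2 r|%R) @^-1` `[eta, +oo[) <= eps%:E)%E.
Proof.
move=> L0 r0 eta eps eta0 eps0.
have eta30 : 0 < eta / 3 by rewrite divr_gt0.
have eps30 : 0 < eps / 3 by rewrite divr_gt0.
have small_incr := @nbhs_open_ereal_lt R 0 (fun=> eps / 3) eps30.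
have [NX _ smallX] := cvg_hfun_increment mmX r (eta / 3) eta30 _ small_incr.
have [NY _ smallY] := cvg_hfun_increment mmY r (eta / 3) eta30 _ small_incr.
pose e : R := (maxn NX NY).+1%:R^-1.
have e0 : 0 < e by rewrite invr_gt0.
have [pi cpl gap_small] := coupling_small_gap r e (eta / 3) (eps / 3) L0 r0 e0 eta30 eps30.
exists pi => //; apply: le_trans (measure_dist_le_increments pi r e eta cpl) _.
have -> : eps = eps / 3 + eps / 3 + eps / 3 by field.
rewrite !EFinD leeD// ?leeD// ltW//.
- exact: smallX (leq_maxl _ _).
- exact: smallY (leq_maxr _ _).
Qed.

End hcost_bounds.

Theorem lemma6p5 (R : realType) (d1 d2 : measure_display)
  (T1 : measurableType d1) (T2 : measurableType d2)
  (dX : T1 -> T1 -> R) (muX : probability T1 R)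
  (dY : T2 -> T2 -> R) (muY : probability T2 R) :
  mm_space dX muX -> mm_space dY muY ->
  LUh dX muX dY muY = 0%E ->
  {ae (@lebesgue_measure R), forall r : R, 0 < r ->
    forall A : set R, measurable A ->
      pushforward muX (fun x => hfun dX muX x r) A =
      pushforward muY (fun y => hfun dY muY y r) A}.
Proof.
move=> mmX mmY L0; apply: aeW => r r0.
apply: pushforward_eq_of_coupled_close; try exact: measurable_hfun.
exact: LUh0_coupled_close (ltW r0).
Qed.
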